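(* Every $\pi\in D_n$ has a unique expression $\pi = w_{1}^{j_{1}} t_{2}^{i_{2}} w_{2}^{j_{2}} t_{3}^{i_{3}} \cdots w_{n-1}^{j_{n-1}} t_{n}^{i_{n}}$ with $0\le i_k\le k-1$, $0\le j_k\le 1$. Then: (1) The set $S^{\circ}_n$ of elements with $j_k=0$ for all $1\le k\le n-1$ is a subgroup of $D_n$ isomorphic to $S_n$; it is the parabolic subgroup generated by $s_1,\dots,s_{n-1}$, and it consists exactly of those $\pi$ whose expression above coincides with the standard OGS canonical form $t_2^{i_2}\cdots t_n^{i_n}$ of $\Phi(\pi)$ in $S_n$ (i.e., no factor $w_k$ with nonzero exponent occurs). (2) The set $Id^{\bullet}_n$ of elements with $i_k=0$ for all $2\le k\le n$ is a subgroup of $D_n$ isomorphic to $\mathbb{Z}_2^{\,n-1}$, and it consists exactly of the elements $\pi\in D_n$ with $\Phi(\pi)=1$.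
   Context: $D_n$ ($n\ge 2$) is the Coxeter group with generators $s_{1'},s_1,\dots,s_{n-1}$ and relations $s^2=1$, $(s_i s_{i+1})^3=1$, $(s_is_j)^2=1$ for $|i-j|\ge 2$, $(s_{1'}s_2)^3=1$, $(s_{1'}s_i)^2=1$ for $i\ne 2$. For $2\le k\le n$, $t_k=s_1s_2\cdots s_{k-1}$; for $1\le k\le n-1$, $w_k=s_k s_{k-1}\cdots s_2 s_1 s_{1'} s_2\cdots s_k$. $\Phi:D_n\to S_n$ is the homomorphism with $\Phi(s_{1'})=s_1$, $\Phi(s_i)=s_i$, where $S_n$ has Coxeter generators $s_i=(i,i+1)$. In $S_n$, with $t_k=s_1\cdots s_{k-1}$, every element has a unique standard OGS canonical form $t_2^{i_2}t_3^{i_3}\cdots t_n^{i_n}$ with $0\le i_k<k$. *)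

(* D_n is realised concretely as the group of signed
   permutations of {1..n} generated by the Coxeter generators s_1',s_1..s_{n-1}
   (its standard faithful reflection representation). *)
From mathcomp Require Import all_boot all_order all_algebra all_fingroup.
Set Implicit Arguments. Unset Strict Implicit. Unset Printing Implicit Defensive.


Definition liftf (T : Type) (U : Type) (emb : T -> U) (pinv : U -> option T)
  (g : U -> U) (x : T) : T :=
  if pinv (g (emb x)) is Some y then y else x.

Lemma liftfK (T : Type) (U : Type) (emb : T -> U) (pinv : U -> option T)
  (g : U -> U) :
  pcancel emb pinv -> (forall u x, pinv u = Some x -> emb x = u) ->
  involutive g -> involutive (liftf emb pinv g).
Proof.
move=> H1 H2 gK x; rewrite /liftf; case E: (pinv (g (emb x))) => [y|]; last by rewrite E.
by rewrite (H2 _ _ E) gK H1.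
Qed.

(* the transposition i-1 <-> i of nat (0-indexed: s_i swaps points i-1, i) *)
Definition sw (i k : nat) : nat :=
  if k == i.-1 then i else if k == i then i.-1 else k.

Lemma swK i : involutive (sw i).
Proof.
move=> k; rewrite /sw; case: i => [|i] /=.
  by case: (k =P 0) => [->|] //= /eqP /negbTE ->; rewrite ?eqxx //.
case: (k =P i) => [->|/eqP ki]; first by rewrite eqxx /= ifN // neq_ltn ltnSn orbT.
case: (k =P i.+1) => [->|/eqP ki1]; first by rewrite eqxx.
by rewrite (negbTE ki) (negbTE ki1).
Qed.

Lemma ordK n : forall u (x : 'I_n), insub u = Some x -> val x = u.
Proof. by move=> u x; case: insubP => // y _ <- [<-]. Qed.

Definition sS (n i : nat) : {perm 'I_n} :=
  perm (can_inj (liftfK (@valK _ _ _) (@ordK n) (swK i))).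

Definition tS (n k : nat) : {perm 'I_n} := (\prod_(1 <= i < k) sS n i)%g.

Definition ogs (n : nat) (f : {ffun 'I_n.+1 -> 'I_n.+1}) : {perm 'I_n} :=
  (\prod_(2 <= k < n.+1) tS n k ^+ f (inord k))%g.

Definition sembed n (x : 'I_n * bool) : nat * bool := (val x.1, x.2).
Definition spinv n (u : nat * bool) : option ('I_n * bool) :=
  omap (fun k => (k, u.2)) (insub u.1).

Lemma sembedK n : pcancel (@sembed n) (@spinv n).
Proof. by case=> k b; rewrite /spinv /sembed /= valK. Qed.

Lemma spinvK n : forall u x, @spinv n u = Some x -> sembed x = u.
Proof.
case=> k b [x c]; rewrite /spinv /=; case E: (insub k) => [y|] //= [<- <-].
by rewrite /sembed /= (ordK E).
Qed.

(* s_i (1 <= i <= n-1): swaps +-i and +-(i+1) (0-indexed points i-1, i) *)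
Definition gs (i : nat) (u : nat * bool) : nat * bool := (sw i u.1, u.2).
(* s_1': i -> -(i+1), i+1 -> -i for i = 1 (0-indexed points 0, 1) *)
Definition gs1' (u : nat * bool) : nat * bool :=
  (sw 1 u.1, if u.1 < 2 then ~~ u.2 else u.2).

Lemma gsK i : involutive (gs i).
Proof. by case=> k b; rewrite /gs /= swK. Qed.

Lemma gs1'K : involutive gs1'.
Proof.
case=> k b; rewrite /gs1' /= swK; congr pair.
have -> : (sw 1 k < 2) = (k < 2).
  by rewrite /sw /=; case: (k =P 0) => [->|] //; case: (k =P 1) => [->|] //.
by case: (k < 2) => //; rewrite negbK.
Qed.

Definition sD (n i : nat) : {perm 'I_n * bool} :=
  perm (can_inj (liftfK (@sembedK n) (@spinvK n) (gsK i))).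
Definition sD1' (n : nat) : {perm 'I_n * bool} :=
  perm (can_inj (liftfK (@sembedK n) (@spinvK n) gs1'K)).

Definition Dn (n : nat) : {set {perm 'I_n * bool}} :=
  <<sD1' n |: [set sD n (val k) | k in [pred k : 'I_n | 0 < val k]]>>%g.

Definition tD (n k : nat) : {perm 'I_n * bool} := (\prod_(1 <= i < k) sD n i)%g.
Definition wD (n k : nat) : {perm 'I_n * bool} :=
  ((\prod_(i <- rev (iota 1 k)) sD n i) * sD1' n * \prod_(2 <= i < k.+1) sD n i)%g.

(* exponent data: e.1 k = i_k (k = 2..n), e.2 k = j_k (k = 1..n-1), indices
   in 'I_n.+1 = {0..n}; unused indices are required to be 0 *)
Definition expo (n : nat) := ({ffun 'I_n.+1 -> 'I_n.+1} * {ffun 'I_n.+1 -> 'I_2})%type.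

Definition valid_expo (n : nat) (e : expo n) : bool :=
  [forall k : 'I_n.+1,
     (val (e.1 k) < maxn 1 (val k)) && (val (e.2 k) <= (0 < val k < n))].

Definition dword (n : nat) (e : expo n) : {perm 'I_n * bool} :=
  (\prod_(1 <= k < n) (wD n k ^+ val (e.2 (inord k)) * tD n k.+1 ^+ val (e.1 (inord k.+1))))%g.

(* Phi : D_n -> S_n, s_1' |-> s_1, s_i |-> s_i : forgetting the signs *)
Definition Phi (n : nat) (p : {perm 'I_n * bool}) : {perm 'I_n} :=
  odflt 1%g [pick q : {perm 'I_n} | [forall k, q k == (p (k, false)).1]].

Definition Scirc (n : nat) : {set {perm 'I_n * bool}} :=
  [set dword e | e in [pred e : expo n | valid_expo e && [forall k, val (e.2 k) == 0]]].
Definition Idbul (n : nat) : {set {perm 'I_n * bool}} :=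
  [set dword e | e in [pred e : expo n | valid_expo e && [forall k, val (e.1 k) == 0]]].

Definition Z2pow (m : nat) := 'rV['Z_2]_m.

From mathcomp Require Import all_boot all_order all_algebra all_fingroup.
From mathcomp Require Import zify.
Set Implicit Arguments. Unset Strict Implicit. Unset Printing Implicit Defensive.
Import GroupScope.

(* D_n is realised on the signed points [0..n-1] (the paper's 1..n): [s_i] swaps
   [i-1] and [i], and [s_1'] swaps [0] and [1] and changes both signs, so [t_k]
   cycles the points below [k] and [w_k] changes the signs of [0] and [k].
   Let [p] be a signed permutation with an even number of sign changes that fixes
   every point above [m].  Then [p] sends [m] to some [(y, c)] with [y <= m], and
   [p * (w_m^c t_(m+1)^(m-y))^-1] fixes every point from [m] on; when [m = 0] the
   parity forces [p = 1].  Peeling factors off from the top writes [p] in normal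
   form, and evaluating a normal form at the top point shows that its exponents
   are determined by [p]; in particular D_n is the whole group of even signed
   permutations.  Forgetting the signs ([Phi]) kills every [w_k] and fixes every
   [t_k], so the normal forms without [w_k] are the unsigned permutations, and
   those without [t_k] form the kernel of [Phi], which is Z_2^(n-1) because the
   signs of [1..n-1] are free and the sign of [0] is fixed by parity. *)

Ltac case_ifs := repeat match goal with
 | |- context[if ?c then _ else _] =>
     match c with
     | context[if _ then _ else _] => fail 1
     | true => fail 1 | false => fail 1
     | _ => case: (boolP c) => ?; rewrite /=
     end
 end.

(** * Action of the generators *)

Definition acts_as n (p : {perm 'I_n * bool}) (g : nat -> bool -> nat * bool) :=
  forall (x : 'I_n) b, sembed (p (x, b)) = g x b.

Section ActsAs.
Variable n : nat.
Implicit Types (p q : {perm 'I_n * bool}) (g h : nat -> bool -> nat * bool).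

Lemma acts_as_ext p g h :
  (forall x b, x < n -> g x b = h x b) -> acts_as p g -> acts_as p h.
Proof. by move=> gh pg x b; rewrite pg gh. Qed.

Lemma acts_as1 : acts_as (1 : {perm 'I_n * bool}) (fun x b => (x, b)).
Proof. by move=> x b; rewrite perm1. Qed.

Lemma acts_asM p q g h :
  acts_as p g -> acts_as q h -> acts_as (p * q) (fun x b => h (g x b).1 (g x b).2).
Proof. by move=> pg qh x b; rewrite permM -pg; case: (p (x, b)) => y c; rewrite qh. Qed.

Lemma acts_as_eval p g (x y : 'I_n) b c :
  acts_as p g -> g x b = (val y, c) -> p (x, b) = (y, c).
Proof. by move=> pg gxb; apply: (pcan_inj (@sembedK n)); rewrite pg gxb. Qed.

Lemma sw_ltn i k : i < n -> k < n -> sw i k < n.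
Proof. by rewrite /sw; case_ifs; lia. Qed.

Lemma acts_as_sD i : i < n -> acts_as (sD n i) (fun x b => (sw i x, b)).
Proof. by move=> lt_in x b; rewrite permE /liftf /= /spinv /= insubT ?sw_ltn. Qed.

Lemma acts_as_sD1' : 1 < n -> acts_as (sD1' n) (fun x b => (sw 1 x, b (+) (x < 2))).
Proof.
move=> lt1n x b; rewrite permE /liftf /= /spinv /= insubT ?sw_ltn //=.
by case: (x < 2); rewrite ?addbT ?addbF.
Qed.

End ActsAs.

Definition tcycle k x := if x == 0 then k.-1 else if x < k then x.-1 else x.

Lemma acts_as_tD n k : k < n -> acts_as (tD n k.+1) (fun x b => (tcycle k.+1 x, b)).
Proof.
elim: k => [|k IHk] lt_kn.
  rewrite /tD big_geq //; apply: acts_as_ext (@acts_as1 n) => x b _.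
  by congr pair; rewrite /tcycle; case_ifs; lia.
rewrite /tD big_nat_recr //=.
apply: acts_as_ext (acts_asM (IHk (ltnW lt_kn)) (acts_as_sD lt_kn)) => x b _ /=.
by congr pair; rewrite /tcycle /sw; case_ifs; lia.
Qed.

Lemma wD_rec n k : 0 < k -> wD n k.+1 = sD n k.+1 * wD n k * sD n k.+1.
Proof.
move=> k_gt0; rewrite /wD.
have -> : iota 1 k.+1 = rcons (iota 1 k) k.+1 by rewrite -cats1 -[k.+1]addn1 iotaD addnC.
by rewrite rev_rcons big_cons big_nat_recr //= !mulgA.
Qed.

Lemma acts_as_wD n k : 0 < k < n ->
  acts_as (wD n k) (fun x b => (x, b (+) ((x == 0) || (x == k)))).
Proof.
elim: k => [|k IHk] /andP [k_gt0 lt_kn] //.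
have [k0 | {}k_gt0] := posnP k.
  move: lt_kn; rewrite k0 => lt1n.
  rewrite /wD big_geq // mulg1 (_ : rev (iota 1 1) = [:: 1%N]) // big_seq1.
  apply: acts_as_ext (acts_asM (acts_as_sD lt1n) (acts_as_sD1' lt1n)) => x b _ /=.
  by rewrite /sw /=; case_ifs; rewrite ?addbT ?addbF ?negbK //; congr pair; lia.
have lt_k : 0 < k < n by rewrite k_gt0 ltnW.
rewrite wD_rec //.
have conj_sD := acts_asM (acts_asM (acts_as_sD lt_kn) (IHk lt_k)) (acts_as_sD lt_kn).
apply: acts_as_ext conj_sD => x b _ /=.
by rewrite /sw /=; case_ifs; rewrite ?addbT ?addbF ?negbK //; congr pair; lia.
Qed.

(** * Signed permutations *)

Section SignedPerms.
Variable n : nat.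
Implicit Types p q : {perm 'I_n * bool}.

Definition pos p k := (p (k, false)).1.
Definition sgn p k := (p (k, false)).2.
Definition signed p := [forall k, forall b, p (k, b) == (pos p k, b (+) sgn p k)].
Definition parity p := \big[addb/false]_(k : 'I_n) sgn p k.

Lemma signedP p k b : signed p -> p (k, b) = (pos p k, b (+) sgn p k).
Proof. by move=> /forallP /(_ k) /forallP /(_ b) /eqP. Qed.

Lemma signed1 : signed 1.
Proof. by apply/forallP => k; apply/forallP => b; rewrite /pos /sgn !perm1 addbF. Qed.

Lemma posM p q k : signed q -> pos (p * q) k = pos q (pos p k).
Proof. by move=> sq; rewrite /pos permM; case: (p _) => y c; rewrite signedP. Qed.

Lemma sgnM p q k : signed q -> sgn (p * q) k = sgn p k (+) sgn q (pos p k).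
Proof. by move=> sq; rewrite /sgn /pos permM; case: (p _) => y c; rewrite signedP. Qed.

Lemma signedM p q : signed p -> signed q -> signed (p * q).
Proof.
move=> sp sq; apply/forallP => k; apply/forallP => b.
by rewrite posM // sgnM // permM (signedP _ _ sp) (signedP _ _ sq) addbA.
Qed.

Lemma pos_inj p : signed p -> injective (pos p).
Proof.
move=> sp k k' eq_pos.
have: p (k, false) = p (k', sgn p k (+) sgn p k').
  by rewrite !signedP // eq_pos -addbA addbb addbF.
by move/perm_inj => [].
Qed.

Lemma parityM p q : signed p -> signed q -> parity (p * q) = parity p (+) parity q.
Proof.
move=> sp sq; rewrite /parity (eq_bigr _ (fun k _ => sgnM p k sq)) big_split /=.
by congr addb; rewrite [RHS](reindex_inj (pos_inj sp)).
Qed.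

Definition signed_perms := [set p | signed p].
Definition even_signed := [set p in signed_perms | ~~ parity p].

Lemma signed_perms_group_set : group_set signed_perms.
Proof.
apply/group_setP; split=> [|p q]; rewrite !inE; first exact: signed1.
exact: signedM.
Qed.
Canonical signed_perms_group := Group signed_perms_group_set.

Lemma even_signed_group_set : group_set even_signed.
Proof.
apply/group_setP; split=> [|p q]; rewrite !inE.
  by rewrite signed1 /parity big1 // => k _; rewrite /sgn perm1.
move=> /andP [sp ep] /andP [sq eq]; rewrite signedM //= parityM //.
by rewrite (negbTE ep) (negbTE eq).
Qed.
Canonical even_signed_group := Group even_signed_group_set.

Lemma acts_as_signed p (h : nat -> nat) (s : nat -> bool) :
  acts_as p (fun x b => (h x, b (+) s x)) ->
  [/\ signed p, forall k, val (pos p k) = h k & forall k, sgn p k = s k].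
Proof.
move=> ph.
have pos_h k : val (pos p k) = h k by have := ph k false; rewrite /pos; case: (p _) => y c [].
have sgn_s k : sgn p k = s k by have := ph k false; rewrite /sgn; case: (p _) => y c [].
split=> //; apply/forallP => k; apply/forallP => b; apply/eqP.
by apply: (pcan_inj (@sembedK n)); rewrite ph /sembed /= sgn_s pos_h.
Qed.

Lemma Phi_pos p k : signed p -> Phi p k = pos p k.
Proof.
move=> sp; rewrite /Phi; case: pickP => [q /forallP q_pos | no_q] /=.
  exact/eqP/q_pos.
by have /forallPn [x] := negbT (no_q (perm (pos_inj sp))); rewrite permE eqxx.
Qed.

Lemma PhiM : {in signed_perms &, {morph @Phi n : p q / p * q}}.
Proof.
move=> p q; rewrite !inE => sp sq; apply/permP => k.
by rewrite permM !Phi_pos ?signedM ?posM.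
Qed.
Canonical Phi_morphism := Morphism PhiM.

Lemma Phi1P p : signed p -> reflect (forall k, pos p k = k) (Phi p == 1).
Proof.
move=> sp; apply: (iffP eqP) => [Phi1 k | pos_id]; first by rewrite -Phi_pos // Phi1 perm1.
by apply/permP => k; rewrite Phi_pos // pos_id perm1.
Qed.

End SignedPerms.

Definition embS_fun n (s : {perm 'I_n}) (u : 'I_n * bool) := (s u.1, u.2).

Lemma embS_fun_inj n s : injective (@embS_fun n s).
Proof. by move=> [x b] [y c] [/perm_inj -> ->]. Qed.

Definition embS n (s : {perm 'I_n}) : {perm 'I_n * bool} := perm (@embS_fun_inj n s).

Section EmbS.
Variable n : nat.
Implicit Types s t : {perm 'I_n}.

Lemma embSE s x b : embS s (x, b) = (s x, b).
Proof. by rewrite permE. Qed.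

Lemma embSM : {in [set: {perm 'I_n}] &, {morph @embS n : s t / s * t}}.
Proof. by move=> s t _ _; apply/permP => -[x b]; rewrite !permM !embSE permM. Qed.
Canonical embS_morphism := Morphism embSM.

Lemma injm_embS : 'injm (@embS n).
Proof.
apply/injmP => s t _ _ eq_st; apply/permP => x.
by have := embSE s x false; rewrite eq_st embSE => -[].
Qed.

Lemma embS_sS i : embS (sS n i) = sD n i.
Proof.
apply/permP => -[x b]; rewrite embSE !permE /liftf /spinv /sembed /=.
by case: insub.
Qed.

Lemma embS_tS k : embS (tS n k) = tD n k.
Proof.
rewrite /tS morph_prod => [|i _]; last exact: in_setT.
by apply: eq_bigr => i _ /=; rewrite embS_sS.
Qed.

Lemma sgn_embS s k : sgn (embS s) k = false.
Proof. by rewrite /sgn embSE. Qed.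

Lemma embS_signed s : signed (embS s).
Proof. by apply/forallP => k; apply/forallP => b; rewrite /pos /sgn !embSE addbF. Qed.

Lemma embS_even s : embS s \in even_signed n.
Proof. by rewrite !inE embS_signed /parity big1 // => k _; rewrite sgn_embS. Qed.

Lemma Phi_embS s : Phi (embS s) = s.
Proof. by apply/permP => x; rewrite Phi_pos ?embS_signed // /pos embSE. Qed.

End EmbS.

Lemma sD_even n i : sD n i \in even_signed n.
Proof. by rewrite -embS_sS embS_even. Qed.

Lemma sD1'_even n : 1 < n -> sD1' n \in even_signed n.
Proof.
case: n => [|[|n]] // _.
have /acts_as_signed [sp _ sgnE] := acts_as_sD1' (isT : 1 < n.+2).
by rewrite !inE sp /parity !big_ord_recl big1 ?sgnE // => k _; rewrite sgnE.
Qed.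

Lemma Dn_sub_even n : 1 < n -> Dn n \subset even_signed n.
Proof.
move=> lt1n; rewrite gen_subG; apply/subsetP => x /setU1P [-> | /imsetP [k _ ->]].
  exact: sD1'_even.
exact: sD_even.
Qed.

Lemma Phi_wD n k : 0 < k < n -> Phi (wD n k) = 1.
Proof.
move=> /acts_as_wD /acts_as_signed [sp pos_id _].
by apply/eqP/Phi1P => // x; apply: val_inj; rewrite pos_id.
Qed.

Lemma tD_signed n k : tD n k \in signed_perms n.
Proof. by rewrite -embS_tS inE embS_signed. Qed.

Lemma wD_signed n k : 0 < k < n -> wD n k \in signed_perms n.
Proof. by move=> /acts_as_wD /acts_as_signed [sp _ _]; rewrite inE. Qed.

Lemma Phi_dword n (e : expo n) : Phi (dword e) = ogs e.1.
Proof.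
rewrite /dword big_seq morph_prod => [|k]; last first.
  by rewrite mem_index_iota => lt_k; rewrite groupM ?groupX ?tD_signed ?wD_signed.
rewrite -big_seq /ogs [RHS]big_add1 /=; apply: eq_big_nat => k lt_k /=.
by rewrite morphM ?groupX ?tD_signed ?wD_signed // !morphX ?tD_signed ?wD_signed //=
  Phi_wD // expg1n mul1g -embS_tS Phi_embS.
Qed.

Lemma dword_j0 n (e : expo n) : [forall k, val (e.2 k) == 0] -> dword e = embS (ogs e.1).
Proof.
move=> /forallP j0; rewrite /ogs morph_prod => [|k _]; last exact: in_setT.
rewrite [RHS]big_add1 /=; apply: eq_bigr => k _.
by rewrite (eqP (j0 _)) expg0 mul1g morphX ?inE //= embS_tS.
Qed.

(** * The normal form *)

Definition stab_from n m := 'C([set u : 'I_n * bool | m <= u.1] | 'P).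

Lemma stab_fromP n m (p : {perm 'I_n * bool}) :
  reflect (forall (x : 'I_n) b, m <= x -> p (x, b) = (x, b)) (p \in stab_from n m).
Proof.
apply: (iffP astabP) => [fix_p x b le_mx | fix_p [x b]].
  by have := fix_p (x, b); rewrite inE => /(_ le_mx).
by rewrite inE => /= le_mx; apply: fix_p.
Qed.
Arguments stab_fromP {n m p}.

Lemma stab_fromS n m m' : m <= m' -> stab_from n m \subset stab_from n m'.
Proof. by move=> le_mm'; apply/astabS/subsetP => u; rewrite !inE => /(leq_trans le_mm'). Qed.

Lemma tD_stab n k : k < n -> tD n k.+1 \in stab_from n k.+1.
Proof.
move=> lt_kn; apply/stab_fromP => x b le_kx; apply: acts_as_eval (acts_as_tD lt_kn) _.
by rewrite /tcycle; case_ifs; congr pair; lia.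
Qed.

Lemma wD_stab n k : 0 < k < n -> wD n k \in stab_from n k.+1.
Proof.
move=> lt_k; apply/stab_fromP => x b lt_kx; apply: acts_as_eval (acts_as_wD lt_k) _.
by rewrite (_ : _ || _ = false) ?addbF //; apply/norP; split; apply/eqP; lia.
Qed.

Lemma tD_expE n m a (x : 'I_n) c : val x = m -> a <= m ->
  sembed ((tD n m.+1 ^+ a) (x, c)) = (m - a, c).
Proof.
move=> xm; elim: a => [|a IHa] le_am; first by rewrite expg0 perm1 /sembed xm subn0.
have lt_mn : m < n by rewrite -xm ltn_ord.
rewrite expgSr permM; case E: ((tD n m.+1 ^+ a) (x, c)) => [y d].
move: (IHa (ltnW le_am)); rewrite E => -[ya ->].
by rewrite (acts_as_tD lt_mn) /tcycle ya; case_ifs; congr pair; lia.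
Qed.

Definition dfactor n m a c := wD n m ^+ c * tD n m.+1 ^+ a.

Lemma dfactorE n m a c (x : 'I_n) : val x = m -> 0 < m -> a <= m -> c <= 1 ->
  sembed (dfactor n m a c (x, false)) = (m - a, c == 1%N).
Proof.
move=> xm m_gt0 le_am le_c1; rewrite permM.
have lt_m : 0 < m < n by rewrite m_gt0 -xm ltn_ord.
have -> : (wD n m ^+ c) (x, false) = (x, c == 1%N).
  case: c le_c1 => [|[|//]] _; first by rewrite expg0 perm1.
  by rewrite expg1; apply: acts_as_eval (acts_as_wD lt_m) _; rewrite /= xm eqxx orbT.
by rewrite tD_expE.
Qed.

Lemma dfactor_stab n m a c : 0 < m < n -> dfactor n m a c \in stab_from n m.+1.
Proof.
by case/andP=> m_gt0 lt_mn; rewrite groupM ?groupX ?wD_stab ?tD_stab ?m_gt0.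
Qed.

Lemma even_stab1 n p : p \in even_signed n -> p \in stab_from n 1 -> p = 1.
Proof.
move=> + /stab_fromP fix_p; rewrite !inE => /andP [sp even_p].
apply/permP => -[x b]; rewrite perm1.
have [x0 | x_gt0] := posnP x; last exact: fix_p.
have pos_x : pos p x = x.
  apply: val_inj => /=; rewrite x0; have [// | y_gt0] := posnP (pos p x).
  have : pos p (pos p x) = pos p x by rewrite /pos fix_p.
  by move/(pos_inj sp) => pos_xx; move: y_gt0; rewrite pos_xx x0.
have sgn_x : sgn p x = false.
  move: even_p; rewrite /parity (bigD1 x) //= big1 ?addbF => [/negbTE //|k neq_kx].
  rewrite /sgn fix_p //; case: (posnP k) => // k0.
  by case/eqP: neq_kx; apply: val_inj => /=; rewrite k0 x0.
by rewrite signedP // pos_x sgn_x addbF.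
Qed.

Lemma sD_Dn n i : 0 < i < n -> sD n i \in Dn n.
Proof.
case/andP=> i_gt0 lt_in; apply/mem_gen/setU1P; right.
by apply/imsetP; exists (Ordinal lt_in).
Qed.

Lemma sD1'_Dn n : sD1' n \in Dn n.
Proof. exact/mem_gen/setU1P/or_introl. Qed.

Lemma tD_Dn n k : k <= n -> tD n k \in Dn n.
Proof.
move=> le_kn; rewrite /tD big_seq; apply: group_prod => i.
by rewrite mem_index_iota => lt_i; apply: sD_Dn; lia.
Qed.

Lemma wD_Dn n k : k < n -> wD n k \in Dn n.
Proof.
move=> lt_kn; rewrite /wD !big_seq !groupM ?sD1'_Dn //; apply: group_prod => i.
  by rewrite mem_rev mem_iota => lt_i; apply: sD_Dn; lia.
by rewrite mem_index_iota => lt_i; apply: sD_Dn; lia.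
Qed.

Lemma dfactor_Dn n m a c : m < n -> dfactor n m a c \in Dn n.
Proof. by move=> lt_mn; rewrite groupM ?groupX ?wD_Dn ?tD_Dn. Qed.

Definition dword_upto n (i j : nat -> nat) m :=
  \prod_(1 <= k < m) dfactor n k (i k.+1) (j k).

Definition bounded_upto m (i j : nat -> nat) :=
  forall k, 0 < k < m -> i k.+1 <= k /\ j k <= 1.

Lemma bounded_uptoW m m' i j : m' <= m -> bounded_upto m i j -> bounded_upto m' i j.
Proof. by move=> le_m'm bnd k /andP [k_gt0 lt_km']; apply: bnd; lia. Qed.

Lemma dword_upto_recr n i j m : 0 < m ->
  dword_upto n i j m.+1 = dword_upto n i j m * dfactor n m (i m.+1) (j m).
Proof. by move=> m_gt0; rewrite /dword_upto big_nat_recr. Qed.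

Lemma dword_upto_Dn n i j m : m <= n -> dword_upto n i j m \in Dn n.
Proof.
move=> le_mn; rewrite /dword_upto big_seq; apply: group_prod => k.
by rewrite mem_index_iota => lt_k; apply: dfactor_Dn; lia.
Qed.

Lemma dword_upto_stab n i j m : m <= n -> dword_upto n i j m \in stab_from n m.
Proof.
move=> le_mn; rewrite /dword_upto big_seq; apply: group_prod => k.
rewrite mem_index_iota => lt_k; apply: (subsetP (@stab_fromS n k.+1 m _)); first lia.
by apply: dfactor_stab; lia.
Qed.

Lemma even_signed_peel n m p : 0 < m < n ->
    p \in even_signed n -> p \in stab_from n m.+1 ->
  exists a c, [/\ a <= m, c <= 1 & p * (dfactor n m a c)^-1 \in stab_from n m].
Proof.
move=> lt_m p_even p_stab; have /andP [m_gt0 lt_mn] := lt_m.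
have sp : signed p by move: p_even; rewrite !inE => /andP [].
pose x := Ordinal lt_mn.
have le_pos : pos p x <= m.
  rewrite leqNgt; apply/negP => lt_pos.
  have : pos p (pos p x) = pos p x by rewrite /pos (stab_fromP p_stab).
  by move/(pos_inj sp) => eq_x; move: lt_pos; rewrite eq_x ltnn.
exists (m - pos p x), (sgn p x); split; [exact: leq_subr | by case: (sgn p x) |].
set r := dfactor n m _ _.
have r_x : r (x, false) = p (x, false).
  apply: (pcan_inj (@sembedK n)); rewrite dfactorE ?leq_subr //; last by case: sgn.
  by rewrite subKn // /sembed /pos /sgn; case: (p _) => y c /=; case: c.
have q_stab : p * r^-1 \in stab_from n m.+1 by rewrite groupM ?groupV ?dfactor_stab.
have q_signed : signed (p * r^-1).
  have r_signed : r \in signed_perms n by rewrite groupM ?groupX ?wD_signed ?tD_signed.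
  have p_signed : p \in signed_perms n by rewrite inE.
  by have := groupM p_signed (groupVr r_signed); rewrite inE.
apply/stab_fromP => z b; rewrite leq_eqVlt => /orP [/eqP mz | lt_mz].
  have -> : z = x by apply: val_inj.
  have q_x : (p * r^-1) (x, false) = (x, false) by rewrite permM -r_x permK.
  by rewrite signedP // /pos /sgn q_x addbF.
exact: (stab_fromP q_stab).
Qed.

Lemma even_signed_dword_upto n m p : 0 < m <= n ->
    p \in even_signed n -> p \in stab_from n m ->
  exists i j, bounded_upto m i j /\ p = dword_upto n i j m.
Proof.
elim: m p => [|m IHm] p /andP [_ le_mn] // p_even p_stab.
have [m0 | m_gt0] := posnP m.
  exists (fun _ => 0), (fun _ => 0); split=> [k|]; first lia.
  by rewrite m0 /dword_upto big_geq // (even_stab1 p_even); rewrite -?m0.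
have lt_m : 0 < m < n by rewrite m_gt0.
have [a [c [le_am le_c1 q_stab]]] := even_signed_peel lt_m p_even p_stab.
have q_even : p * (dfactor n m a c)^-1 \in even_signed n.
  by rewrite groupM ?groupV // (subsetP (Dn_sub_even _)) ?dfactor_Dn //; lia.
have le_m : 0 < m <= n by rewrite m_gt0 ltnW.
have [i [j [bnd_ij q_eq]]] := IHm _ le_m q_even q_stab.
exists (fun k => if k == m.+1 then a else i k), (fun k => if k == m then c else j k).
split=> [k /andP [k_gt0 lt_km] | ].
  have [-> | neq_km] := eqVneq k m; first by rewrite !eqxx.
  rewrite eqSS (negbTE neq_km); apply: bnd_ij; lia.
rewrite dword_upto_recr // !eqxx -[p](mulgKV (dfactor n m a c)) q_eq.
congr (_ * _); apply: eq_big_nat => k /andP [_ lt_km].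
by rewrite eqSS !ifN //; apply/eqP; lia.
Qed.

Lemma dword_upto_inj n m i j i' j' : m <= n ->
    bounded_upto m i j -> bounded_upto m i' j' ->
    dword_upto n i j m = dword_upto n i' j' m ->
  forall k, 0 < k < m -> i k.+1 = i' k.+1 /\ j k = j' k.
Proof.
elim: m => [|m IHm] le_mn bnd bnd' eq_dw k /andP [k_gt0 lt_km] //.
have [m0 | m_gt0] := posnP m; first lia.
pose x := Ordinal le_mn.
have top_m : 0 < m < m.+1 by rewrite m_gt0 /=.
have top_eval i1 j1 : bounded_upto m.+1 i1 j1 ->
    sembed (dword_upto n i1 j1 m.+1 (x, false)) = (m - i1 m.+1, j1 m == 1%N).
  move=> bnd1; have [le_i le_j] := bnd1 m top_m.
  rewrite dword_upto_recr // permM.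
  by rewrite (stab_fromP (dword_upto_stab _ _ (ltnW le_mn))) ?dfactorE.
have [le_i le_j] := bnd m top_m.
have [le_i' le_j'] := bnd' m top_m.
have [eq_i eq_j] : i m.+1 = i' m.+1 /\ j m = j' m.
  move: (top_eval _ _ bnd); rewrite eq_dw top_eval // => -[eq_i eq_j]; split; first lia.
  by move: eq_j le_j le_j'; case: (j m) => [|[|]]; case: (j' m) => [|[|]].
have [-> // | neq_km] := eqVneq k m.
have bnd_m := bounded_uptoW (leqnSn m).
apply: (IHm (ltnW le_mn) (bnd_m _ _ bnd) (bnd_m _ _ bnd')); last by lia.
by move: eq_dw; rewrite !dword_upto_recr // eq_i eq_j => /mulIg.
Qed.

Definition expo_i n (e : expo n) k := val (e.1 (inord k)).
Definition expo_j n (e : expo n) k := val (e.2 (inord k)).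

Lemma dwordE n (e : expo n) : dword e = dword_upto n (expo_i e) (expo_j e) n.
Proof. by []. Qed.

Definition expo_of n (i j : nat -> nat) : expo n :=
  ([ffun k : 'I_n.+1 => inord (if 1 < k then i k else 0)],
   [ffun k : 'I_n.+1 => inord (if 0 < k < n then j k else 0)]).

Section ExpoOf.
Variables (n : nat) (i j : nat -> nat).
Hypothesis bnd : bounded_upto n i j.

Lemma valid_expo_of : valid_expo (expo_of n i j).
Proof.
apply/forallP => k; rewrite !ffunE /=; have lt_kn := ltn_ord k.
apply/andP; split.
  case: (ltnP 1 k) => lt_1k; last by rewrite inordK; lia.
  have [|le_i _] := @bnd k.-1; first lia.
  rewrite prednK in le_i; last lia.
  by rewrite inordK; lia.
case: (boolP (0 < k < n)) => lt_k; last by rewrite inordK.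
by have [_ le_j] := bnd lt_k; rewrite inordK; lia.
Qed.

Lemma dword_expo_of : dword (expo_of n i j) = dword_upto n i j n.
Proof.
apply: eq_big_nat => k lt_k; have [le_i le_j] := bnd lt_k.
have [lt_kn1 lt_k1n1] : k < n.+1 /\ k.+1 < n.+1 by lia.
by rewrite !ffunE /= !inordK //; case_ifs; try lia.
Qed.

End ExpoOf.

Lemma valid_expo_bounded n (e : expo n) : valid_expo e -> bounded_upto n (expo_i e) (expo_j e).
Proof.
move=> /forallP valid_e k lt_k; rewrite /expo_i /expo_j.
have /andP [le_i _] := valid_e (inord k.+1); have /andP [_ le_j] := valid_e (inord k).
by move: le_i le_j => /=; rewrite !inordK; lia.
Qed.

Lemma expo_eq n (e e' : expo n) : valid_expo e -> valid_expo e' ->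
    (forall k, 0 < k < n -> expo_i e k.+1 = expo_i e' k.+1 /\ expo_j e k = expo_j e' k) ->
  e = e'.
Proof.
case: e e' => [i j] [i' j'] /forallP valid_e /forallP valid_e' eq_ij.
have /= eq_at k := eq_ij k; rewrite /expo_i /expo_j /= in eq_at.
congr pair; apply/ffunP => k; apply: val_inj.
  have /andP [le_i _] := valid_e k; have /andP [le_i' _] := valid_e' k.
  case: (leqP k 1) => [le_k1 | lt_1k]; first by move: le_i le_i' => /=; lia.
  have [|eq_i _] := eq_at k.-1; first by have := ltn_ord k; lia.
  by rewrite (prednK (ltnW lt_1k)) inord_val in eq_i.
have /andP [_ le_j] := valid_e k; have /andP [_ le_j'] := valid_e' k.
case: (boolP (0 < k < n)) => lt_k; first by have [_] := eq_at k lt_k; rewrite inord_val.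
by move: le_j le_j'; rewrite /= (negbTE lt_k); lia.
Qed.

Lemma dword_surj n p : 0 < n -> p \in even_signed n ->
  exists2 e : expo n, valid_expo e & p = dword e.
Proof.
move=> n_gt0 p_even.
have p_stab : p \in stab_from n n by apply/stab_fromP => x b; rewrite leqNgt ltn_ord.
have le_n : 0 < n <= n by rewrite n_gt0 leqnn.
have [i [j [bnd ->]]] := even_signed_dword_upto le_n p_even p_stab.
by exists (expo_of n i j); rewrite ?valid_expo_of ?dword_expo_of.
Qed.

Lemma dword_inj n (e e' : expo n) :
  valid_expo e -> valid_expo e' -> dword e = dword e' -> e = e'.
Proof.
move=> valid_e valid_e' eq_dw; apply: expo_eq => //.
have [bnd bnd'] := (valid_expo_bounded valid_e, valid_expo_bounded valid_e').
exact: dword_upto_inj (leqnn n) bnd bnd' eq_dw.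
Qed.

Lemma Dn_even n : 1 < n -> Dn n = even_signed n.
Proof.
move=> lt1n; apply/eqP; rewrite eqEsubset Dn_sub_even //=.
apply/subsetP => p /(dword_surj (ltnW lt1n)) [e _ ->]; rewrite dwordE; exact: dword_upto_Dn.
Qed.

(** * The subgroups S°_n and Id°_n *)

Definition zero_j n (e : expo n) : expo n := (e.1, [ffun=> ord0]).

Lemma valid_zero_j n (e : expo n) : valid_expo e -> valid_expo (zero_j e).
Proof.
move=> /forallP valid_e; apply/forallP => k; rewrite ffunE /=.
by have /andP [-> _] := valid_e k.
Qed.

Lemma dword_zero_j n (e : expo n) : dword (zero_j e) = embS (ogs e.1).
Proof. by rewrite dword_j0 //; apply/forallP => k; rewrite ffunE. Qed.

Lemma Scirc_embS n : 1 < n -> Scirc n = @embS n @* [set: {perm 'I_n}].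
Proof.
move=> lt1n; rewrite morphimEdom; apply/setP => p; apply/imsetP/imsetP.
  by case=> e /andP [_ j0] ->; exists (ogs e.1); rewrite ?inE ?dword_j0.
case=> s _ ->.
have [e valid_e embS_e] := dword_surj (ltnW lt1n) (embS_even s).
exists (zero_j e); first by rewrite inE valid_zero_j //=; apply/forallP => k; rewrite ffunE.
by rewrite dword_zero_j -Phi_dword -embS_e Phi_embS.
Qed.

Lemma Scirc_gen n : 1 < n ->
  Scirc n = <<[set sD n (val k) | k in [pred k : 'I_n | 0 < val k]]>>.
Proof.
move=> lt1n; apply/eqP; rewrite eqEsubset; apply/andP; split.
  apply/subsetP => _ /imsetP [e /andP [_ /forallP j0] ->].
  rewrite dwordE /dword_upto big_seq; apply: group_prod => k; rewrite mem_index_iota => lt_k.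
  rewrite /dfactor /expo_j (eqP (j0 _)) expg0 mul1g groupX // /tD big_seq.
  apply: group_prod => i; rewrite mem_index_iota => lt_i.
  have lt_in : i < n by lia.
  by apply/mem_gen/imsetP; exists (Ordinal lt_in) => //; rewrite inE /=; lia.
rewrite Scirc_embS // gen_subG; apply/subsetP => _ /imsetP [k _ ->].
by rewrite -embS_sS mem_morphim ?inE.
Qed.

Lemma Scirc_ogs n : Scirc n = [set pi in Dn n |
  [exists e : expo n, [&& valid_expo e, pi == dword e,
                          [forall k, val (e.2 k) == 0] & Phi pi == ogs e.1]]].
Proof.
apply/setP => p; apply/imsetP/idP.
  case=> e /andP [valid_e j0] ->; rewrite inE dwordE dword_upto_Dn //=.
  by apply/existsP; exists e; rewrite valid_e j0 -dwordE Phi_dword !eqxx.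
rewrite inE => /andP [_ /existsP [e /and4P [valid_e /eqP -> j0 _]]].
by exists e; rewrite ?inE ?valid_e.
Qed.

Definition expo0 n : expo n := ([ffun=> ord0], [ffun=> ord0]).

Lemma valid_expo0 n : valid_expo (expo0 n).
Proof. by apply/forallP => k; rewrite !ffunE /=; lia. Qed.

Lemma ogs0 n (f : {ffun 'I_n.+1 -> 'I_n.+1}) : (forall k, val (f k) = 0) -> ogs f = 1.
Proof. by move=> f0; rewrite /ogs big1 // => k _; rewrite f0 expg0. Qed.

Lemma Idbul_Phi n : 1 < n -> Idbul n = [set pi in Dn n | Phi pi == 1].
Proof.
move=> lt1n; apply/setP => p; apply/imsetP/idP.
  case=> e /andP [_ /forallP i0] ->; rewrite inE dwordE dword_upto_Dn //=.
  by rewrite -dwordE Phi_dword ogs0 // => k; apply/eqP.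
rewrite inE Dn_even // => /andP [p_even /eqP Phi1].
have [e valid_e p_e] := dword_surj (ltnW lt1n) p_even.
have ogs1 : ogs e.1 = 1 by rewrite -Phi_dword -p_e.
have /(congr1 fst) /= i0 : zero_j e = zero_j (expo0 n).
  apply: dword_inj; rewrite ?valid_zero_j ?valid_expo0 // !dword_zero_j ogs1.
  by rewrite ogs0 // => k; rewrite ffunE.
by exists e; rewrite // inE valid_e i0; apply/forallP => k; rewrite ffunE.
Qed.

Lemma Dn_Phi1 n : 1 < n ->
  [set pi in Dn n | Phi pi == 1] = even_signed n :&: 'ker (Phi_morphism n).
Proof.
move=> lt1n; apply/setP => p; rewrite Dn_even // !inE.
by case: (signed p) => //=; rewrite andbT.
Qed.

Lemma Zp2_neq0_inj (a b : 'Z_2) : (a != 0%R) = (b != 0%R) -> a = b.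
Proof. by case: a b => [[|[|//]] ?] [[|[|//]] ?] //= _; apply: val_inj. Qed.

Section SignChanges.
Variable N : nat.
Implicit Types v w : 'rV['Z_2]_N.

Definition bit v k := v ord0 k != 0%R.
Definition vparity v := \big[addb/false]_(k < N) bit v k.

Definition flip v (x : 'I_N.+1) := if unlift ord0 x is Some k then bit v k else vparity v.

Definition flips_fun v (u : 'I_N.+1 * bool) := (u.1, u.2 (+) flip v u.1).

Lemma flips_fun_inj v : injective (flips_fun v).
Proof.
move=> [x b] [y c] [<-] /(congr1 (addb^~ (flip v x))).
by rewrite -!addbA addbb !addbF => ->.
Qed.

Definition flips v : {perm 'I_N.+1 * bool} := perm (@flips_fun_inj v).

Lemma flipsE v x b : flips v (x, b) = (x, b (+) flip v x).
Proof. by rewrite permE. Qed.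

Lemma bitD v w k : bit (v + w) k = bit v k (+) bit w k.
Proof. by rewrite /bit mxE; case: (v _ _) (w _ _) => [[|[|//]] ?] [[|[|//]] ?]. Qed.

Lemma flipD v w x : flip (v + w) x = flip v x (+) flip w x.
Proof.
rewrite /flip; case: unlift => [k|]; first exact: bitD.
by rewrite /vparity -big_split; apply: eq_bigr => k _; rewrite bitD.
Qed.

Lemma flipsM : {in [set: 'rV['Z_2]_N] &, {morph flips : v w / v * w}}.
Proof.
by move=> v w _ _; apply/permP => -[x b]; rewrite permM !flipsE flipD addbA.
Qed.
Canonical flips_morphism := Morphism flipsM.

Lemma injm_flips : 'injm flips.
Proof.
apply/injmP => v w _ _ /= eq_vw; apply/rowP => k.
have := congr1 (fun p : {perm _} => p (lift ord0 k, false)) eq_vw.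
by rewrite /= !flipsE /flip liftK => -[] /Zp2_neq0_inj.
Qed.

Lemma signed_flips v : [/\ signed (flips v), forall k, pos (flips v) k = k
                         & forall k, sgn (flips v) k = flip v k].
Proof.
split=> [|k|k]; rewrite /pos /sgn ?flipsE //.
by apply/forallP => k; apply/forallP => b; rewrite /pos /sgn !flipsE.
Qed.

Lemma im_flips : flips @* [set: 'rV['Z_2]_N] = even_signed N.+1 :&: 'ker (Phi_morphism N.+1).
Proof.
rewrite morphimEdom; apply/setP => p; apply/imsetP/idP => [[v _ ->] | ].
  have [sp pos_id sgn_flip] := signed_flips v.
  rewrite !inE sp /=; apply/andP; split; last exact/Phi1P.
  rewrite /parity big_ord_recl.
  rewrite (eq_bigr (bit v)) => [|k _]; last by rewrite sgn_flip /flip liftK.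
  by rewrite sgn_flip /flip unlift_none addbb.
rewrite !inE => /andP [/andP [sp even_p] /andP [_ /(Phi1P sp) pos_id]].
exists (\row_k (sgn p (lift ord0 k))%:R)%R => //.
have bitE k : bit (\row_k (sgn p (lift ord0 k))%:R)%R k = sgn p (lift ord0 k).
  by rewrite /bit mxE; case: sgn.
apply/permP => -[x b]; rewrite flipsE signedP // pos_id; congr (_, _ (+) _).
case: (unliftP ord0 x) => [k -> | ->]; rewrite /flip ?liftK ?unlift_none ?bitE //.
move: even_p; rewrite /vparity (eq_bigr _ (fun k _ => bitE k)) /parity big_ord_recl.
by case: (sgn p ord0); case: (\big[addb/false]_(_ < _) _).
Qed.

End SignChanges.

Lemma even_ker_Phi_isog N :
  even_signed N.+1 :&: 'ker (Phi_morphism N.+1) \isog [set: 'rV['Z_2]_N].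
Proof. by rewrite -im_flips isog_sym sub_isog ?injm_flips. Qed.

Theorem mainTheorem6 (n : nat) (hn : 2 <= n) :
  (* unique expression  w_1^{j_1} t_2^{i_2} ... w_{n-1}^{j_{n-1}} t_n^{i_n} *)
  (forall pi, pi \in Dn n -> exists! e : expo n, valid_expo e /\ pi = dword e) /\
  (* (1) S°_n *)
  ((group_set (Scirc n) && (Scirc n \subset Dn n)) /\
   Scirc n \isog [set: {perm 'I_n}] /\
   Scirc n = <<[set sD n (val k) | k in [pred k : 'I_n | 0 < val k]]>>%g /\
   Scirc n = [set pi in Dn n |
                [exists e : expo n, [&& valid_expo e, pi == dword e,
                                        [forall k, val (e.2 k) == 0] &
                                        Phi pi == ogs e.1]]]) /\
  (* (2) Id°_n *)
  ((group_set (Idbul n) && (Idbul n \subset Dn n)) /\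
   Idbul n \isog [set: Z2pow n.-1] /\
   Idbul n = [set pi in Dn n | Phi pi == 1%g]).
Proof.
have Dn_eq := Dn_even hn.
split.
  move=> pi; rewrite Dn_eq => /(dword_surj (ltnW hn)) [e valid_e ->].
  exists e; split=> [|e' [valid_e' eq_e]]; first by split.
  exact: dword_inj eq_e.
split.
  rewrite -Scirc_gen // -Scirc_ogs Scirc_embS // groupP Dn_eq /=.
  split; first by apply/subsetP => _ /morphimP [s _ _ ->]; apply: embS_even.
  by rewrite isog_sym sub_isog ?injm_embS.
have Idbul_ker : Idbul n = even_signed n :&: 'ker (Phi_morphism n).
  by rewrite Idbul_Phi // Dn_Phi1.
split; first by rewrite Idbul_ker group_setI Dn_eq subsetIl.
split; last exact: Idbul_Phi.
by rewrite Idbul_ker; case: n hn {Dn_eq Idbul_ker} => [|N] // _; apply: even_ker_Phi_isog.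
Qed.
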